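(* Let $A\in \mathbb{Z}^{m\times n}$, $b\in \mathbb{Z}^m$, and suppose $P:=\{x:Ax\leq b\}$ is nonempty. For a nonempty face $F$ of $P$, let $A_Fx\le b_F$ be the subsystem of $Ax\le b$ consisting of the inequalities satisfied with equality by all points of $F$. Then the following are equivalent for a prime $p$: (1) $P$ is a $p$-adic polyhedron; (2) for every nonempty face $F$ of $P$, the affine hull of $F$ contains a $p$-adic point; (3) for every nonempty face $F$ of $P$ and every real vector $z$, if $A_F^\top z$ is integral then $b_F^\top z$ is $p$-adic; (4) for all $w\in\mathbb{R}^n$ for which $\max\{w^\top x:x\in P\}$ has an optimum, it has a $p$-adic optimal solution; (5) for all $w\in\mathbb{Z}^n$ for which $\max\{w^\top x:x\in P\}$ has an optimum, its optimal value is $p$-adic.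
   Context: A $p$-adic rational is a number $a/p^k$ with $a,k\in\mathbb{Z}$, $k\ge0$; a vector is $p$-adic if all entries are $p$-adic rationals. A nonempty rational polyhedron is $p$-adic if every nonempty face of it contains a $p$-adic point. *)

From HB Require Import structures.
From mathcomp Require Import all_boot all_order all_algebra.
From mathcomp Require Import reals.
Set Implicit Arguments. Unset Strict Implicit. Unset Printing Implicit Defensive.
Import Order.TTheory GRing.Theory Num.Theory.
Local Open Scope ring_scope.

Section Defs.
Variable R : realType.

Definition padic (p : nat) (x : R) : Prop :=
  exists (a : int) (k : nat), x = a%:~R / (p%:R ^+ k).

Definition padic_vec (p n : nat) (x : 'cV[R]_n) : Prop :=
  forall i, padic p (x i 0).

Definition is_integral (x : R) : Prop := exists k : int, x = k%:~R.

Definition polyh (m n : nat) (A : 'M[int]_(m, n)) (b : 'cV[int]_m)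
  (x : 'cV[R]_n) : Prop :=
  forall i, (map_mx intr A *m x) i 0 <= (b i 0)%:~R.

Definition dotv (n : nat) (w x : 'cV[R]_n) : R := \sum_(j < n) w j 0 * x j 0.

(* F is a face of P: F = P ∩ {x : c^T x = d} for some inequality c^T x <= d
   valid on P (c = 0, d = 0 gives P itself). *)
Definition is_face (n : nat) (P F : 'cV[R]_n -> Prop) : Prop :=
  exists (c : 'cV[R]_n) (d : R),
    (forall x, P x -> dotv c x <= d) /\
    (forall x, F x <-> (P x /\ dotv c x = d)).

Definition aff_hull (n : nat) (F : 'cV[R]_n -> Prop) (y : 'cV[R]_n) : Prop :=
  exists (k : nat) (xs : 'I_k -> 'cV[R]_n) (l : 'I_k -> R),
    (forall i, F (xs i)) /\ \sum_(i < k) l i = 1 /\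
    y = \sum_(i < k) l i *: xs i.

(* index i belongs to the implicit-equality subsystem A_F x <= b_F of F *)
Definition tight_row (m n : nat) (A : 'M[int]_(m, n)) (b : 'cV[int]_m)
  (F : 'cV[R]_n -> Prop) (i : 'I_m) : Prop :=
  forall x, F x -> (map_mx intr A *m x) i 0 = (b i 0)%:~R.

Definition optimal (n : nat) (P : 'cV[R]_n -> Prop) (w x0 : 'cV[R]_n) : Prop :=
  P x0 /\ forall x, P x -> dotv w x <= dotv w x0.

End Defs.

From HB Require Import structures.
From mathcomp Require Import all_boot all_order all_algebra.
From mathcomp Require Import reals.
From mathcomp Require Import ring lra zify.
From Stdlib Require Import Classical.
Set Implicit Arguments. Unset Strict Implicit. Unset Printing Implicit Defensive.
Import Order.TTheory GRing.Theory Num.Theory.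
Local Open Scope ring_scope.

(** The implications (1) => (2) => (3) and (1) => (4) => (5) are direct.  The
    converse directions rest on two facts.  First, every nonempty face F of P
    contains a nonempty affine subspace {x | A_T x = b_T}: pick x in F with a
    maximal set of tight rows; a point of the subspace of those rows lying
    outside F would yield a direction in which one can move inside F until a
    further row becomes tight.  Second, a system A_T x = b_T with a real solution
    has a p-adic one as soon as b^T z is p-adic whenever z is supported on T and
    A^T z is integral: through the Smith normal form A_T = L D Q this reduces to
    a diagonal system, whose coordinates are tested one by one.  Condition (3)
    is exactly this dual condition on the face of the tight rows T; for (5),
    shifting z by an integral vector makes it nonnegative, and then the integral
    objective A^T z is optimised on {x | A_T x = b_T} with value b^T z. *)

Section Arithmetic.
Variable R : realType.
Implicit Types (x y : R) (a : int).

Lemma is_integralE x : is_integral x <-> x \is a Num.int.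
Proof. by split => [[k ->] | /intrP]. Qed.

Definition integral_vec n (v : 'cV[R]_n) : Prop := forall j, is_integral (v j 0).

Lemma integral_vec_intmx n (v : 'cV[R]_n) :
  integral_vec v -> exists w : 'cV[int]_n, v = map_mx intr w.
Proof.
move=> vZ; exists (\col_j Num.floor (v j 0)).
by apply/matrixP => j k; rewrite (ord1 k) !mxE floorK //; apply/is_integralE.
Qed.

Lemma integral_vec_mulmx m n (M : 'M[int]_(m, n)) (v : 'cV[R]_n) :
  integral_vec v -> integral_vec (map_mx intr M *m v).
Proof.
move=> vZ i; apply/is_integralE; rewrite mxE rpred_sum // => j _.
by rewrite mxE rpredM ?intr_int //; apply/is_integralE.
Qed.

Variable p : nat.
Hypothesis p_gt0 : (0 < p)%N.

Lemma padic_intr a : padic p (a%:~R : R).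
Proof. by exists a, 0%N; rewrite expr0 divr1. Qed.

Lemma padic0 : padic p (0 : R).
Proof. exact: (padic_intr 0). Qed.

Lemma padic_integral x : is_integral x -> padic p x.
Proof. by move=> [a ->]; apply: padic_intr. Qed.

Lemma padicD x y : padic p x -> padic p y -> padic p (x + y).
Proof.
move=> [a [k ->]] [c [l ->]].
have pX_neq0 j : (p%:R ^+ j : R) != 0 by rewrite expf_neq0 // pnatr_eq0 -lt0n.
exists (a * p%:Z ^+ l + c * p%:Z ^+ k), (k + l)%N.
rewrite rmorphD !rmorphM !rmorphXn /= exprD.
by field; rewrite !pX_neq0.
Qed.

Lemma padicM x y : padic p x -> padic p y -> padic p (x * y).
Proof.
move=> [a [k ->]] [c [l ->]]; exists (a * c), (k + l)%N.
by rewrite rmorphM exprD invfM mulrACA.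
Qed.

Lemma padic_sum (I : finType) (P : pred I) (F : I -> R) :
  (forall i, P i -> padic p (F i)) -> padic p (\sum_(i | P i) F i).
Proof. by move=> pF; apply: big_ind => //; [apply: padic0 | apply: padicD]. Qed.

Lemma padic_dotv n (w y : 'cV[R]_n) :
  integral_vec w -> padic_vec p y -> padic p (dotv w y).
Proof. by move=> wZ py; apply: padic_sum => j _; apply/padicM/py/padic_integral. Qed.

Lemma padic_vec_mulmx m n (M : 'M[int]_(m, n)) (y : 'cV[R]_n) :
  padic_vec p y -> padic_vec p (map_mx intr M *m y).
Proof.
by move=> py i; rewrite mxE; apply: padic_sum => j _; rewrite mxE; apply/padicM/py/padic_intr.
Qed.

End Arithmetic.

Section DotProduct.
Variable R : realType.

Lemma dotvE n (w x : 'cV[R]_n) : dotv w x = (w^T *m x) 0 0.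
Proof. by rewrite mxE; apply: eq_bigr => j _; rewrite mxE. Qed.

Lemma dotvC n (w x : 'cV[R]_n) : dotv w x = dotv x w.
Proof. by apply: eq_bigr => j _; rewrite mulrC. Qed.

Lemma dotv_trmx m n (M : 'M[R]_(m, n)) (z : 'cV[R]_m) (y : 'cV[R]_n) :
  dotv (M^T *m z) y = dotv z (M *m y).
Proof. by rewrite !dotvE trmx_mul trmxK mulmxA. Qed.

Lemma dotv_intmxE n (w : 'cV[int]_n) (x : 'cV[R]_n) :
  dotv (map_mx intr w) x = \sum_j (w j 0)%:~R * x j 0.
Proof. by apply: eq_bigr => j _; rewrite mxE. Qed.

Lemma dotvNr n (c v : 'cV[R]_n) : dotv c (- v) = - dotv c v.
Proof. by rewrite /dotv -sumrN; apply: eq_bigr => j _; rewrite mxE mulrN. Qed.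

Lemma dotv_line n (c x v : 'cV[R]_n) t :
  dotv c (x + t *: v) = dotv c x + t * dotv c v.
Proof. by rewrite !dotvE mulmxDr -scalemxAr !mxE. Qed.

Lemma dotvDr n (c x y : 'cV[R]_n) : dotv c (x + y) = dotv c x + dotv c y.
Proof. by have := dotv_line c x y 1; rewrite scale1r mul1r. Qed.

Lemma mulmx_line m n (M : 'M[R]_(m, n)) (x v : 'cV[R]_n) t i :
  (M *m (x + t *: v)) i 0 = (M *m x) i 0 + t * (M *m v) i 0.
Proof. by rewrite mulmxDr -scalemxAr !mxE. Qed.

Lemma mulmx_subE m n (M : 'M[R]_(m, n)) (x y : 'cV[R]_n) i :
  (M *m (x - y)) i 0 = (M *m x) i 0 - (M *m y) i 0.
Proof. by have := mulmx_line M x y (-1) i; rewrite scaleN1r mulN1r. Qed.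

End DotProduct.

Definition mask_mx {V : pzRingType} {m} (T : {set 'I_m}) : 'M[V]_m :=
  diag_mx (\row_i (i \in T)%:R).

Lemma mask_mxE (V : pzRingType) m n (T : {set 'I_m}) (M : 'M[V]_(m, n)) i j :
  (mask_mx T *m M) i j = if i \in T then M i j else 0.
Proof. by rewrite mul_diag_mx !mxE; case: (i \in T); rewrite ?mul1r ?mul0r. Qed.

Lemma tr_mask_mx (V : pzRingType) m (T : {set 'I_m}) : (mask_mx T)^T = mask_mx T :> 'M[V]_m.
Proof. exact: tr_diag_mx. Qed.

Lemma map_mask_mx (V W : pzRingType) (f : {rmorphism V -> W}) m (T : {set 'I_m}) :
  map_mx f (mask_mx T) = mask_mx T.
Proof. by rewrite map_diag_mx; congr diag_mx; apply/rowP => i; rewrite !mxE rmorph_nat. Qed.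

Definition smith_mx m n (d : seq int) : 'M[int]_(m, n) :=
  \matrix_(i, j) (d`_i *+ (i == j :> nat)).

Section PadicSolution.
Variables (R : realType) (p : nat).
Hypothesis p_gt0 : (0 < p)%N.
Local Notation intmx := (map_mx (intr : int -> R)).

Definition padic_dual m n (A : 'M[int]_(m, n)) (b : 'cV[int]_m) : Prop :=
  forall z : 'cV[R]_m, integral_vec ((intmx A)^T *m z) -> padic p (dotv (intmx b) z).

Lemma padic_solution_smith m n (d : seq int) (c : 'cV[int]_m) (u0 : 'cV[R]_n) :
  let D := smith_mx m n d in
  intmx D *m u0 = intmx c -> padic_dual D c ->
  exists2 u, intmx D *m u = intmx c & padic_vec p u.
Proof.
move=> D Du0 dual.
(* Coordinates j with j >= m or d`_j = 0 multiply a zero column of D. *)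
pose keep (j : 'I_n) := (j < m)%N && (d`_j != 0).
pose u := \col_j (if keep j then u0 j 0 else 0).
exists u.
  rewrite -Du0; apply/matrixP => i k; rewrite !mxE; apply: eq_bigr => j _; rewrite !mxE.
  have [ij | _] := eqVneq (i : nat) j; last by rewrite mulr0n !mul0r.
  rewrite /keep -ij ltn_ord /=.
  by rewrite (ord1 k); case: (d`_i =P 0) => [-> | _]; rewrite ?mul0rn ?mul0r.
move=> j; rewrite mxE; case: ifP => [/andP [jm dj] | _]; last exact: padic0.
pose i := Ordinal jm.
have dj_neq0 : (d`_j)%:~R != 0 :> R by rewrite intr_eq0.
pose z : 'cV[R]_m := (d`_j)%:~R^-1 *: delta_mx i 0.
have Dz : (intmx D)^T *m z = delta_mx j 0.
  apply/matrixP => k l; rewrite (ord1 l) -scalemxAr -colE !mxE eqxx andbT.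
  have [-> | kj] := eqVneq k j; first by rewrite eqxx mulr1n mulVf.
  have -> : (i == k :> nat) = false by apply/negbTE; rewrite eq_sym; exact: kj.
  by rewrite mulr0n mulr0.
have <- : dotv (intmx c) z = u0 j 0.
  by rewrite -Du0 dotvC -dotv_trmx Dz dotvE trmx_delta -rowE mxE.
by apply: dual; rewrite Dz => k; apply/is_integralE; rewrite mxE natr_int.
Qed.

Lemma padic_solution m n (A : 'M[int]_(m, n)) (b : 'cV[int]_m) (x0 : 'cV[R]_n) :
  intmx A *m x0 = intmx b -> padic_dual A b ->
  exists2 y, intmx A *m y = intmx b & padic_vec p y.
Proof.
have [L uL [Q uQ [d _ ->]]] := int_Smith_normal_form A.
have mulVmxR k (M : 'M[int]_k) : M \in unitmx -> intmx (invmx M) *m intmx M = 1%:M.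
  by move=> uM; rewrite -map_mxM mulVmx ?map_mx1.
have mulmxVR k (M : 'M[int]_k) : M \in unitmx -> intmx M *m intmx (invmx M) = 1%:M.
  by move=> uM; rewrite -map_mxM mulmxV ?map_mx1.
set D := \matrix_(i, j) _; rewrite !map_mxM => Ax0 dual.
pose c := invmx L *m b.
have Du0 : intmx D *m (intmx Q *m x0) = intmx c.
  by rewrite /c map_mxM -Ax0 !mulmxA mulVmxR // mul1mx.
have dualD : padic_dual D c.
  move=> z Dz; rewrite /c map_mxM dotvC -dotv_trmx dotvC.
  apply: dual; rewrite !map_mxM !trmx_mul -!mulmxA (mulmxA _ _ z) -trmx_mul.
  by rewrite mulVmxR // trmx1 mul1mx map_trmx; apply: integral_vec_mulmx.
have [u Du pu] := padic_solution_smith Du0 dualD.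
exists (intmx (invmx Q) *m u); last exact: padic_vec_mulmx.
by rewrite -!mulmxA (mulmxA (intmx Q)) mulmxVR // mul1mx Du /c map_mxM mulmxA mulmxVR // mul1mx.
Qed.

End PadicSolution.

Section Polyhedron.
Variables (R : realType) (m n : nat) (A : 'M[int]_(m, n)) (b : 'cV[int]_m).
Local Notation intmx := (map_mx (intr : int -> R)).
Local Notation P := (@polyh R m n A b).

Definition active (x : 'cV[R]_n) : {set 'I_m} :=
  [set i | (intmx A *m x) i 0 == (b i 0)%:~R].

Definition tight_on (T : {set 'I_m}) (x : 'cV[R]_n) : Prop :=
  forall i, i \in T -> (intmx A *m x) i 0 = (b i 0)%:~R.

Lemma tight_on_active x : tight_on (active x) x.
Proof. by move=> i; rewrite inE => /eqP. Qed.

Lemma polyh_of_face F x : is_face P F -> F x -> P x.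
Proof. by move=> [c [d [_ Fcd]]] /Fcd []. Qed.

Lemma ray_step x v : P x ->
  (forall i, i \in active x -> (intmx A *m v) i 0 = 0) ->
  exists2 t, 0 < t & P (x + t *: v) /\
    ((exists i, 0 < (intmx A *m v) i 0) -> (#|active x| < #|active (x + t *: v)|)%N).
Proof.
move=> Px vx.
have [[i0 vi0] | v_le0] := classic (exists i, 0 < (intmx A *m v) i 0); last first.
  exists 1 => //; split => [i | //]; rewrite mulmx_line mul1r.
  have : ~~ (0 < (intmx A *m v) i 0) by apply/negP => vi; apply: v_le0; exists i.
  by rewrite -leNgt; have := Px i; lra.
pose slack i := ((b i 0)%:~R - (intmx A *m x) i 0) / (intmx A *m v) i 0.
have [j vj j_min] := @arg_minP _ _ _ i0 (fun i => 0 < (intmx A *m v) i 0) slack vi0.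
have xj : (intmx A *m x) j 0 < (b j 0)%:~R.
  by rewrite lt_neqAle Px andbT; apply: contraTneq vj => xj; rewrite vx ?ltxx // inE xj.
exists (slack j); first by rewrite divr_gt0 // subr_gt0.
split => [i | _].
  rewrite mulmx_line; have := Px i.
  have [vi | vi] := ltP 0 ((intmx A *m v) i 0).
    by have := ler_wpM2r (ltW vi) (j_min i vi); rewrite /slack divfK ?gt_eqF //; lra.
  have : slack j * (intmx A *m v) i 0 <= 0.
    by apply: mulr_ge0_le0 => //; apply: divr_ge0; rewrite ?subr_ge0 ?ltW.
  lra.
apply: proper_card; apply/properP; split.
  apply/subsetP => i ix; rewrite inE mulmx_line vx // mulr0 addr0.
  exact/eqP/tight_on_active.
exists j; last by rewrite inE lt_eqF.
by rewrite inE mulmx_line /slack (divfK (lt0r_neq0 vj)) addrC subrK.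
Qed.

Lemma face_active_grow (c : 'cV[R]_n) d x y :
  (forall z, P z -> dotv c z <= d) -> P x -> dotv c x = d ->
  tight_on (active x) y -> ~ (P y /\ dotv c y = d) ->
  exists2 z, P z /\ dotv c z = d & (#|active x| < #|active z|)%N.
Proof.
move=> valid Px cx yx not_Fy.
have no_ascent s : (forall i, i \in active x -> (intmx A *m s) i 0 = 0) -> dotv c s <= 0.
  move=> sx; have [t t_gt0 [Pt _]] := ray_step Px sx.
  by have := valid _ Pt; rewrite dotv_line cx -(pmulr_rle0 _ t_gt0); lra.
pose v := y - x.
have vx i : i \in active x -> (intmx A *m v) i 0 = 0.
  by move=> ix; rewrite mulmx_subE (yx i ix) (tight_on_active ix) subrr.
have cv : dotv c v = 0.
  apply/eqP; rewrite eq_le no_ascent //=.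
  have := no_ascent (- v); rewrite dotvNr oppr_le0; apply.
  by move=> i ix; rewrite mulmxN mxE vx ?oppr0.
have [i yi] : exists i, (b i 0)%:~R < (intmx A *m y) i 0.
  apply: NNPP => none; apply: not_Fy; split.
    by move=> i; rewrite leNgt; apply/negP => yi; apply: none; exists i.
  by rewrite -[y](addrNK x) addrC -[y - x]scale1r dotv_line cv mulr0 addr0.
have vi : 0 < (intmx A *m v) i 0 by rewrite mulmx_subE subr_gt0 (le_lt_trans (Px i)).
have [t _ [Pt grow]] := ray_step Px vx.
exists (x + t *: v); last by apply: grow; exists i.
by rewrite dotv_line cv mulr0 addr0.
Qed.

Lemma face_tight_subspace F : is_face P F -> (exists x, F x) ->
  exists T, (exists x, F x /\ tight_on T x) /\ (forall y, tight_on T y -> F y).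
Proof.
move=> [c [d [valid Fcd]]] [x Fx].
have grow_or_stop x' : F x' -> (forall y, tight_on (active x') y -> F y) \/
    exists2 z, F z & (#|active x'| < #|active z|)%N.
  move=> Fx'; case: (classic (forall y, tight_on (active x') y -> F y)) => [|Fy_not].
    by left.
  have [y yF] := not_all_ex_not _ _ Fy_not; have [yx' not_Fy] := imply_to_and _ _ yF.
  have [Px' cx'] := (Fcd x').1 Fx'.
  have [z Fz grow] := face_active_grow valid Px' cx' yx' (fun Fy => not_Fy ((Fcd y).2 Fy)).
  by right; exists z => //; apply/Fcd.
suff [x' Fx' Fall] : exists2 x', F x' & forall y, tight_on (active x') y -> F y.
  by exists (active x'); split => //; exists x'; split => //; apply: tight_on_active.
have [k] : exists k, (m - #|active x| <= k)%N by exists (m - #|active x|)%N.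
elim: k x Fx => [|k IH] x' Fx' x'k; have [Fall | [z Fz grow]] := grow_or_stop x' Fx';
  try by exists x'.
  by have := max_card (active z); rewrite card_ord; lia.
by apply: (IH z Fz); have := max_card (active z); rewrite card_ord; lia.
Qed.

Lemma tight_face T : is_face P (fun y => P y /\ tight_on T y).
Proof.
pose e : 'cV[R]_m := \col_i (i \in T)%:R.
have slackE y : dotv e (intmx b) - dotv ((intmx A)^T *m e) y =
    \sum_(i in T) ((b i 0)%:~R - (intmx A *m y) i 0).
  rewrite dotv_trmx /dotv -sumrB [RHS]big_mkcond; apply: eq_bigr => i _.
  by rewrite !mxE; case: (i \in T); rewrite ?mul1r ?mul0r ?subr0.
exists ((intmx A)^T *m e), (dotv e (intmx b)); split => [y Py | y].
  by rewrite -subr_ge0 slackE sumr_ge0 // => i _; rewrite subr_ge0.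
split=> [[Py Ty] | [Py cy]]; split => //.
  by apply/eqP; rewrite eq_sym -subr_eq0 slackE big1 // => i /Ty ->; rewrite subrr.
have /psumr_eq0P slack0 : \sum_(i in T) ((b i 0)%:~R - (intmx A *m y) i 0) = 0.
  by rewrite -slackE cy subrr.
move=> i iT; apply/eqP; rewrite eq_sym -subr_eq0 slack0 // => j _.
by rewrite subr_ge0.
Qed.

Lemma aff_hull_tight_row F i y :
  tight_row A b F i -> aff_hull F y -> (intmx A *m y) i 0 = (b i 0)%:~R.
Proof.
move=> Fi [k [xs [l [Fxs [l1 ->]]]]]; rewrite mulmx_sumr summxE.
under eq_bigr => j _ do rewrite -scalemxAr mxE (Fi _ (Fxs j)).
by rewrite -mulr_suml l1 mul1r.
Qed.

Lemma optimal_tight_combination (T : {set 'I_m}) x (z : 'cV[R]_m) :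
  (forall i, 0 <= z i 0) -> (forall i, i \notin T -> z i 0 = 0) ->
  P x -> tight_on T x ->
  optimal P ((intmx A)^T *m z) x /\ dotv ((intmx A)^T *m z) x = dotv (intmx b) z.
Proof.
move=> z_ge0 zT Px Tx.
have value : dotv ((intmx A)^T *m z) x = dotv (intmx b) z.
  rewrite dotv_trmx dotvC dotv_intmxE; apply: eq_bigr => i _.
  by have [/Tx -> // | /zT ->] := boolP (i \in T); rewrite !mulr0.
split => //; split => // y Py; rewrite value dotv_trmx dotvC.
by rewrite dotv_intmxE; apply: ler_sum => i _; rewrite ler_wpM2r.
Qed.

Variable p : nat.
Hypothesis p_gt0 : (0 < p)%N.

Lemma padic_tight_solution T x0 : tight_on T x0 ->
  (forall z : 'cV[R]_m, (forall i, i \notin T -> z i 0 = 0) ->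
     integral_vec ((intmx A)^T *m z) -> padic p (dotv (intmx b) z)) ->
  exists2 y, tight_on T y & padic_vec p y.
Proof.
move=> Tx0 dual.
have tight_onE y : tight_on T y <-> intmx (mask_mx T *m A) *m y = intmx (mask_mx T *m b).
  rewrite !map_mxM map_mask_mx -mulmxA; split => [Ty | /matrixP Ty i iT].
    apply/matrixP => i k; rewrite (ord1 k) !mask_mxE.
    by case: ifP => // iT; rewrite [RHS]mxE; apply: Ty.
  by move: (Ty i 0); rewrite !mask_mxE iT [RHS]mxE.
have [|y Ay py] := padic_solution p_gt0 (proj1 (tight_onE x0) Tx0).
  move=> z; rewrite !map_mxM map_mask_mx trmx_mul tr_mask_mx -mulmxA => Az.
  rewrite dotvC -dotv_trmx tr_mask_mx dotvC; apply: dual => // i iT.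
  by rewrite mask_mxE (negbTE iT).
by exists y => //; apply/tight_onE.
Qed.

Lemma padic_dual_tight (y : 'cV[R]_n) (z : 'cV[R]_m) : padic_vec p y ->
  (forall i, z i 0 != 0 -> (intmx A *m y) i 0 = (b i 0)%:~R) ->
  integral_vec ((intmx A)^T *m z) -> padic p (dotv (intmx b) z).
Proof.
move=> py yz Az.
have -> : dotv (intmx b) z = dotv ((intmx A)^T *m z) y.
  rewrite dotv_trmx dotv_intmxE [RHS]dotvC; apply: eq_bigr => i _.
  by have [-> | /yz ->] := eqVneq (z i 0) 0; rewrite ?mulr0.
exact: padic_dotv.
Qed.

End Polyhedron.

Section Equivalence.
Variables (R : realType) (m n : nat) (A : 'M[int]_(m, n)) (b : 'cV[int]_m) (p : nat).
Hypothesis p_gt0 : (0 < p)%N.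
Local Notation intmx := (map_mx (intr : int -> R)).
Local Notation P := (@polyh R m n A b).

Definition padic_polyhedron : Prop :=
  forall F, is_face P F -> (exists x, F x) -> exists x, F x /\ padic_vec p x.

Definition padic_aff_hulls : Prop :=
  forall F, is_face P F -> (exists x, F x) -> exists y, aff_hull F y /\ padic_vec p y.

Definition padic_dual_faces : Prop :=
  forall F, is_face P F -> (exists x, F x) ->
  forall z : 'cV[R]_m, (forall i, ~ tight_row A b F i -> z i 0 = 0) ->
    integral_vec ((intmx A)^T *m z) -> padic p (\sum_(i < m) (b i 0)%:~R * z i 0).

Definition padic_optimal_solutions : Prop :=
  forall w : 'cV[R]_n, (exists x0, optimal P w x0) ->
  exists x0, optimal P w x0 /\ padic_vec p x0.

Definition padic_optimal_values : Prop :=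
  forall w : 'cV[int]_n, (exists x0, optimal P (intmx w) x0) ->
  forall x0, optimal P (intmx w) x0 -> padic p (dotv (intmx w) x0).

Lemma padic_face_point F : is_face P F -> (exists x, F x) ->
  (forall T x, P x -> tight_on A b T x ->
     forall z : 'cV[R]_m, (forall i, i \notin T -> z i 0 = 0) ->
     integral_vec ((intmx A)^T *m z) -> padic p (dotv (intmx b) z)) ->
  exists x, F x /\ padic_vec p x.
Proof.
move=> Fface Fne dual.
have [T [[x [Fx Tx]] TF]] := face_tight_subspace Fface Fne.
have [y Ty py] := padic_tight_solution p_gt0 Tx (dual T x (polyh_of_face Fface Fx) Tx).
by exists y; split => //; apply: TF.
Qed.

Lemma polyhedron_aff_hulls : padic_polyhedron -> padic_aff_hulls.
Proof.
move=> padicP F Fface Fne; have [x [Fx px]] := padicP F Fface Fne.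
by exists x; split => //; exists 1%N, (fun=> x), (fun=> 1); rewrite !big_ord1 scale1r.
Qed.

Lemma aff_hulls_dual_faces : padic_aff_hulls -> padic_dual_faces.
Proof.
move=> padic_hulls F Fface Fne z zF Az; have [y [Fy py]] := padic_hulls F Fface Fne.
rewrite -dotv_intmxE; apply: (padic_dual_tight p_gt0 py _ Az) => i zi.
apply: (aff_hull_tight_row _ Fy); apply: NNPP => not_tight.
by rewrite (zF i not_tight) eqxx in zi.
Qed.

Lemma dual_faces_polyhedron : padic_dual_faces -> padic_polyhedron.
Proof.
move=> padic_duals F Fface Fne; apply: padic_face_point => // T x Px Tx z zT Az.
rewrite dotv_intmxE; apply: (padic_duals _ (tight_face _ A b T)) => [|i not_tight|//].
  by exists x.
have [iT | /zT //] := boolP (i \in T).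
by exfalso; apply: not_tight => y [_ Ty]; apply: Ty.
Qed.

Lemma polyhedron_optimal_solutions : padic_polyhedron -> padic_optimal_solutions.
Proof.
move=> padicP w [x0 [Px0 x0_max]].
pose F x := P x /\ dotv w x = dotv w x0.
have Fface : is_face P F by exists w, (dotv w x0).
have [x [[Px wx] px]] := padicP F Fface (ex_intro _ x0 (conj Px0 erefl)).
by exists x; split => //; split => // y Py; rewrite wx; apply: x0_max.
Qed.

Lemma optimal_solutions_values : padic_optimal_solutions -> padic_optimal_values.
Proof.
move=> padic_sols w w_opt x0 [Px0 x0_max].
have [x1 [[Px1 x1_max] px1]] := padic_sols _ w_opt.
have -> : dotv (intmx w) x0 = dotv (intmx w) x1 by apply/eqP; rewrite eq_le x1_max ?x0_max.
by apply: padic_dotv => // j; rewrite mxE; exists (w j 0).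
Qed.

Lemma optimal_values_polyhedron : padic_optimal_values -> padic_polyhedron.
Proof.
move=> padic_vals F Fface Fne; apply: padic_face_point => // T x Px Tx z zT Az.
pose k : 'cV[int]_m := \col_i Num.floor (z i 0).
pose z' := z - intmx k.
have z'_ge0 i : 0 <= z' i 0 by rewrite !mxE subr_ge0 floor_le.
have z'T i : i \notin T -> z' i 0 = 0 by move=> /zT zi; rewrite !mxE zi floor0 subrr.
have [w Aw] : exists w : 'cV[int]_n, (intmx A)^T *m z' = intmx w.
  apply: integral_vec_intmx => j; apply/is_integralE.
  rewrite mulmx_subE rpredB //; first exact/is_integralE/Az.
  by rewrite map_trmx -map_mxM mxE intr_int.
have [x_opt x_val] := optimal_tight_combination z'_ge0 z'T Px Tx.
rewrite Aw in x_opt x_val.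
have := padic_vals w (ex_intro _ x x_opt) x x_opt; rewrite x_val => pz'.
rewrite -[z](subrK (intmx k)) dotvDr; apply: padicD => //.
by apply: padic_dotv => // i; rewrite mxE; [exists (b i 0) | apply: padic_intr].
Qed.

End Equivalence.

Unset Implicit Arguments.

Theorem theorem5p2 (R : realType) (m n : nat)
  (A : 'M[int]_(m, n)) (b : 'cV[int]_m) (p : nat) :
  prime p ->
  (exists x : 'cV[R]_n, polyh A b x) ->
  [<->
    (* (1) P is p-adic *)
    (forall F : 'cV[R]_n -> Prop, is_face (polyh A b) F -> (exists x, F x) ->
       exists x, F x /\ padic_vec p x);
    (* (2) affine hull of every nonempty face contains a p-adic point *)
    (forall F : 'cV[R]_n -> Prop, is_face (polyh A b) F -> (exists x, F x) ->
       exists y, aff_hull F y /\ padic_vec p y);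
    (* (3) A_F^T z integral ==> b_F^T z p-adic (z supported on A_F rows) *)
    (forall F : 'cV[R]_n -> Prop, is_face (polyh A b) F -> (exists x, F x) ->
       forall z : 'cV[R]_m,
         (forall i, ~ tight_row A b F i -> z i 0 = 0) ->
         (forall j, is_integral (((map_mx intr A)^T *m z) j 0)) ->
         padic p (\sum_(i < m) (b i 0)%:~R * z i 0));
    (* (4) every real objective with an optimum has a p-adic optimal solution *)
    (forall w : 'cV[R]_n, (exists x0, optimal (polyh A b) w x0) ->
       exists x0, optimal (polyh A b) w x0 /\ padic_vec p x0);
    (* (5) every integral objective with an optimum has p-adic optimal value *)
    (forall w : 'cV[int]_n,
       (exists x0, optimal (polyh A b) (map_mx intr w : 'cV[R]_n) x0) ->
       forall x0, optimal (polyh A b) (map_mx intr w : 'cV[R]_n) x0 ->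
         padic p (dotv (map_mx intr w : 'cV[R]_n) x0))
  ].
Proof.
(* Primality is only used through [0 < p], and P need not be nonempty. *)
move=> /prime_gt0 p_gt0 _; tfae.
- exact: polyhedron_aff_hulls.
- exact: aff_hulls_dual_faces.
- by move=> /(dual_faces_polyhedron p_gt0) /polyhedron_optimal_solutions.
- exact: optimal_solutions_values.
- exact: optimal_values_polyhedron.
Qed.
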